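(* Let $\mathcal G$ be a CFG. Suppose there exist: (1) an inductive invariant $\mathsf{Inv}$ containing the initial state; (2) a supermartingale function $V:\mathsf{Inv}\to\mathbb R$ on $\mathsf{Inv}$ with $V(\sigma_\bot)=0$ and $V(\sigma)>0$ for every non-terminal $\sigma\in\mathsf{Inv}$; (3) a function $U:\mathsf{Inv}\to\mathbb N$ with $U(\sigma_\bot)=0$ such that: (a) at every non-terminal assignment or nondeterministic state $\sigma\in\mathsf{Inv}$, $U(\sigma)>U(\sigma')$ for every successor $\sigma'$; (b) for every $r\in\mathbb R$, letting $V_{\le r}=\{\sigma\in\mathsf{Inv}: V(\sigma)\le r\}$: (i) $U$ is bounded on $V_{\le r}$, and (ii) there is $\epsilon_r>0$ such that for every non-terminal probabilistic state $(l,\mathbf x)\in V_{\le r}$, $\sum \mathsf{Pr}(l,l')[\mathbf x]>\epsilon_r$, where the sum ranges over the successors $(l',\mathbf x')$ with $U(l',\mathbf x')<U(l,\mathbf x)$. Then $\mathcal G$ is almost-surely terminating, i.e. $\Pr_{term}(\mathcal G)=1$.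
   Context: A probabilistic control flow graph (CFG) is a tuple $\mathcal G=(L,V,l_{init},\mathbf x_{init},\mapsto,G,\mathsf{Pr},\mathsf{Upd})$. $L$ is a finite set of locations, partitioned into assignment, nondeterministic and probabilistic locations. The variables in $V$ range over $\mathbb Q$. $(l_{init},\mathbf x_{init})$ is the initial state. There are finitely many guarded transitions. At probabilistic locations, each outgoing transition $(l,l')$ carries a probability expression $\mathsf{Pr}(l,l')$ whose values are positive and, over the enabled transitions, sum to $1$. Assignment locations have at most one outgoing transition, carrying an update of one variable by an arithmetic expression. A state is a pair $(l,\mathbf x)$, and successors are given by enabled transitions. Every state has at least one, and finitely many, successors. A scheduler resolves nondeterministic choices as a function of the finite path so far, and each scheduler $\mathfrak s$ induces a probability measure $\mathbb P_{\mathfrak s}$ on runs. The terminal state is $\sigma_\bot=(l_{out},\mathbf 0)$. $\Pr_{term}(\mathcal G)=\inf_{\mathfrak s}\mathbb P_{\mathfrak s}[\text{run visits }\sigma_\bot]$. An inductive invariant is a set of states closed under taking successors. A function $f:\mathsf{Inv}\to\mathbb R$ is a supermartingale function on $\mathsf{Inv}$ if, for every non-terminal $(l,\mathbf x)\in\mathsf{Inv}$: - if the state is an assignment or nondeterministic state, then $f(l,\mathbf x)\ge f(\sigma')$ for every successor $\sigma'$; - if it is a probabilistic state, then $f(l,\mathbf x)\ge\sum\mathsf{Pr}(l,l')[\mathbf x]\,f(l',\mathbf x')$, where the sum is over its successors. *)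

From HB Require Import structures.
From mathcomp Require Import all_boot all_order all_algebra.
From mathcomp Require Import all_classical all_reals.
Set Implicit Arguments. Unset Strict Implicit. Unset Printing Implicit Defensive.
Import Order.TTheory GRing.Theory Num.Theory.
Local Open Scope classical_set_scope.
Local Open Scope ring_scope.

Inductive loc_kind := KAssign | KNondet | KProb.

(* Arithmetic expressions, guards and
   probability expressions are represented semantically, as functions of the
   current valuation of the (finitely many) program variables. *)
Record CFG := {
  Loc : finType;
  Var : finType;
  kind : Loc -> loc_kind;
  l_init : Loc;
  x_init : {ffun Var -> rat};
  l_out : Loc;
  trans : rel Loc;
  guard : Loc -> Loc -> {ffun Var -> rat} -> bool;
  Prb : Loc -> Loc -> {ffun Var -> rat} -> rat;
  Upd : Loc -> Loc -> option (Var * ({ffun Var -> rat} -> rat))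
        (* Upd(l,l') : Some (v, e) is "v := e"; None is the no-op update *)
}.

Arguments kind : clear implicits.
Arguments trans : clear implicits.
Arguments guard : clear implicits.
Arguments Prb : clear implicits.
Arguments Upd : clear implicits.

Section CFGSemantics.
Variable G : CFG.

Definition state := (Loc G * {ffun Var G -> rat})%type.

Definition sigma_init : state := (l_init G, x_init G).
Definition sigma_bot : state := (l_out G, [ffun _ => 0]).

Definition enabled (s : state) (l' : Loc G) : bool :=
  trans G s.1 l' && guard G s.1 l' s.2.

Definition cfg_next (s : state) (l' : Loc G) : state :=
  (l', if kind G s.1 is KAssign then
         match Upd G s.1 l' with
         | Some (v, e) => [ffun w => if w == v then e s.2 else s.2 w]
         | None => s.2
         end
       else s.2).

Definition cfg_succ (s s' : state) : Prop := exists2 l', enabled s l' & s' = cfg_next s l'.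

Definition wf_cfg : Prop :=
  [/\
      (forall l l1 l2, kind G l = KAssign -> trans G l l1 -> trans G l l2 -> l1 = l2),
      (forall s : state, exists l', enabled s l'),
      (forall s : state, kind G s.1 = KProb -> forall l', enabled s l' ->
          0 < Prb G s.1 l' s.2) &
      (forall s : state, kind G s.1 = KProb ->
          \sum_(l' | enabled s l') Prb G s.1 l' s.2 = 1)].

(* A (history-dependent, deterministic) scheduler: given the finite path so far
   (history h followed by the current state s), picks the next location. *)
Definition scheduler := seq state -> state -> Loc G.

Definition valid_sched (sc : scheduler) : Prop :=
  forall h s, kind G s.1 = KNondet -> enabled s (sc h s).

Variable R : realType.

(* Probability, under scheduler sc, that the run starting with the finite path
   h ++ [:: s] visits sigma_bot within at most n further steps. *)
Fixpoint reach (sc : scheduler) (n : nat) (h : seq state) (s : state) : R :=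
  if s == sigma_bot then 1 else
  match n with
  | 0 => 0
  | n'.+1 =>
    match kind G s.1 with
    | KAssign => \sum_(l' | enabled s l') reach sc n' (rcons h s) (cfg_next s l')
    | KNondet => reach sc n' (rcons h s) (cfg_next s (sc h s))
    | KProb => \sum_(l' | enabled s l')
                 ratr (Prb G s.1 l' s.2) * reach sc n' (rcons h s) (cfg_next s l')
    end
  end.

(* P_sc[run visits sigma_bot] = sup_n P_sc[visit within n steps]
   (continuity of the measure from below). *)
Definition prob_term_sched (sc : scheduler) : R :=
  sup (range (fun n => reach sc n [::] sigma_init)).

Definition Pr_term : R :=
  inf [set p | exists2 sc, valid_sched sc & p = prob_term_sched sc].

Definition inductive_invariant (Inv : set state) : Prop :=
  forall s s', Inv s -> cfg_succ s s' -> Inv s'.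

Definition supermartingale (Inv : set state) (f : state -> R) : Prop :=
  forall s, Inv s -> s != sigma_bot ->
    (kind G s.1 <> KProb -> forall s', cfg_succ s s' -> f s' <= f s) /\
    (kind G s.1 = KProb ->
       \sum_(l' | enabled s l') ratr (Prb G s.1 l' s.2) * f (cfg_next s l') <= f s).

End CFGSemantics.

(* The sublevel sets {V <= r} are where the ranking function U works: there U is
   bounded by some B and, from every non-terminal state, U strictly decreases with
   probability at least c > 0 (surely at non-probabilistic states).  Hence a run
   stays non-terminated inside {V <= r} for k*B steps with probability at most
   (1 - c^B)^k.  On the other hand V is a nonnegative supermartingale, so by the
   optional-stopping argument the run ever leaves {V <= r} with probability
   at most V(init)/r.  Letting r -> oo and then k -> oo, the run terminates with
   probability 1, whatever the scheduler. *)
From HB Require Import structures.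
From mathcomp Require Import all_boot all_order all_algebra.
From mathcomp Require Import all_classical all_reals all_analysis.
From mathcomp Require Import ring lra.
Set Implicit Arguments. Unset Strict Implicit. Unset Printing Implicit Defensive.
Import Order.TTheory GRing.Theory Num.Theory.
Local Open Scope classical_set_scope.
Local Open Scope ring_scope.

Lemma expr_eventually_le (R : realType) (z e : R) :
  `|z| < 1 -> 0 < e -> exists k, z ^+ k <= e.
Proof.
move=> z1 e0; have [N _ HN] := cvgr0_norm_le _ (cvg_expr z1) _ e0.
by exists N; apply: le_trans (HN N (leqnn N)); apply: ler_norm.
Qed.

Lemma loc_kind_comparable : comparable loc_kind.
Proof. by do 2 case; by [left | right]. Qed.

HB.instance Definition _ := comparableMixin loc_kind_comparable.

Section Termination.
Variables (R : realType) (G : CFG).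
Hypothesis Hwf : wf_cfg G.
Local Notation st := (state G).

Lemma Prb_ge0 (s : st) l' : kind G s.1 = KProb -> enabled s l' ->
  0 <= ratr (Prb G s.1 l' s.2) :> R.
Proof. by case: Hwf => _ _ Hpos _ Hk He; rewrite ler0q ltW // Hpos. Qed.

Lemma Prb_sum1 (s : st) : kind G s.1 = KProb ->
  \sum_(l' | enabled s l') ratr (Prb G s.1 l' s.2) = 1 :> R.
Proof. by case: Hwf => _ _ _ Hsum Hk; rewrite -rmorph_sum Hsum // rmorph1. Qed.

Lemma enabled_assign (s : st) : kind G s.1 = KAssign ->
  exists2 l0, enabled s l0 & enabled s =1 pred1 l0.
Proof.
case: Hwf => Huniq Hex _ _ Hk; have [l0 H0] := Hex s; exists l0 => // l /=.
apply/idP/eqP => [Hl|-> //].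
by case/andP: Hl => Hl _; case/andP: H0 => H0 _; apply: (Huniq s.1).
Qed.

Variable sc : scheduler G.
Hypothesis Hsc : valid_sched sc.

Definition expect (F : st -> R) (h : seq st) (s : st) : R :=
  match kind G s.1 with
  | KAssign => \sum_(l' | enabled s l') F (cfg_next s l')
  | KNondet => F (cfg_next s (sc h s))
  | KProb => \sum_(l' | enabled s l') ratr (Prb G s.1 l' s.2) * F (cfg_next s l')
  end.

Lemma reachS n h s : reach R sc n.+1 h s =
  if s == sigma_bot G then 1 else expect (reach R sc n (rcons h s)) h s.
Proof. by []. Qed.

Lemma expect_det h (s : st) : kind G s.1 != KProb ->
  exists2 s', cfg_succ s s' & forall F, expect F h s = F s'.
Proof.
rewrite /expect; case Hk: (kind G s.1) => [||] HnP; last by rewrite eqxx in HnP.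
  have [l0 H0 Hen] := enabled_assign Hk.
  by exists (cfg_next s l0) => [|F]; [exists l0 | rewrite (big_pred1 l0 Hen)].
by exists (cfg_next s (sc h s)) => //; exists (sc h s) => //; apply: Hsc.
Qed.

Lemma expect_le F1 F2 h (s : st) :
  (forall s', cfg_succ s s' -> F1 s' <= F2 s') -> expect F1 h s <= expect F2 h s.
Proof.
move=> HF; have [Hk|/(expect_det h)[s' Hs' Hdet]] := eqVneq (kind G s.1) KProb;
  last by rewrite !Hdet HF.
rewrite /expect Hk; apply: ler_sum => l Hl.
by rewrite ler_wpM2l ?Prb_ge0 ?HF //; exists l.
Qed.

Lemma expect_cst k h (s : st) : expect (fun=> k) h s = k.
Proof.
have [Hk|/(expect_det h)[s' _ -> //]] := eqVneq (kind G s.1) KProb.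
by rewrite /expect Hk -mulr_suml Prb_sum1 ?mul1r.
Qed.

Lemma expectB F1 F2 h (s : st) :
  expect (fun x => F1 x - F2 x) h s = expect F1 h s - expect F2 h s.
Proof.
rewrite /expect; case: (kind G s.1); rewrite -?sumrB //.
by apply: eq_bigr => l _; rewrite mulrBr.
Qed.

Lemma expectZ k F h (s : st) : expect (fun x => k * F x) h s = k * expect F h s.
Proof.
rewrite /expect; case: (kind G s.1); rewrite ?mulr_sumr //.
by apply: eq_bigr => l _; rewrite mulrCA.
Qed.

Lemma reach_ge0 n h (s : st) : 0 <= reach R sc n h s.
Proof.
elim: n h s => [|n IH] h s; first by rewrite /=; case: ifP.
rewrite reachS; case: ifP => // _.
by rewrite -[leLHS](expect_cst 0 h s); apply: expect_le => s' _; apply: IH.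
Qed.

Lemma reach_le1 n h (s : st) : reach R sc n h s <= 1.
Proof.
elim: n h s => [|n IH] h s; first by rewrite /=; case: ifP.
rewrite reachS; case: ifP => // _.
by rewrite -[leRHS](expect_cst 1 h s); apply: expect_le => s' _; apply: IH.
Qed.

Variables (Inv : set st) (V : st -> R) (U : st -> nat).
Hypothesis HInv : inductive_invariant Inv.
Hypothesis HVsm : supermartingale Inv V.
Hypothesis HVbot : V (sigma_bot G) = 0.
Hypothesis HVpos : forall s, Inv s -> s != sigma_bot G -> 0 < V s.
Hypothesis HUdec : forall s, Inv s -> s != sigma_bot G -> kind G s.1 <> KProb ->
  forall s', cfg_succ s s' -> (U s' < U s)%N.

Lemma V_ge0 s : Inv s -> 0 <= V s.
Proof.
move=> Is; have [->|Hb] := eqVneq s (sigma_bot G); first by rewrite HVbot.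
exact/ltW/HVpos.
Qed.

Lemma expect_V_le h s : Inv s -> s != sigma_bot G -> expect V h s <= V s.
Proof.
move=> Is Hb; have [Hdet Hprob] := HVsm Is Hb.
have [Hk|Hk] := eqVneq (kind G s.1) KProb; first by rewrite /expect Hk Hprob.
by have [s' Hs' ->] := expect_det h Hk; apply: Hdet => //; apply/eqP.
Qed.

(* [survive r psi n h s] is the expectation of psi at time n on the runs from s
   that have neither terminated nor left the sublevel set {V <= r} by then. *)
Fixpoint survive (r : R) (psi : seq st -> st -> R) (n : nat) (h : seq st) (s : st) : R :=
  if (s == sigma_bot G) || (r < V s) then 0 else
  if n is n'.+1 then expect (survive r psi n' (rcons h s)) h s else psi h s.

Lemma survive_stop r psi n h s :
  (s == sigma_bot G) || (r < V s) -> survive r psi n h s = 0.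
Proof. by move=> Hs; case: n => [|n] /=; rewrite Hs. Qed.

Lemma survive_le1 r n h s : survive r (fun _ _ => 1) n h s <= 1.
Proof.
elim: n h s => [|n IH] h s /=; case: ifP => _; rewrite ?ler01 //.
by rewrite -[leRHS](expect_cst 1 h s); apply: expect_le => s' _; apply: IH.
Qed.

Lemma survive_cst r k n h s :
  survive r (fun _ _ => k) n h s = k * survive r (fun _ _ => 1) n h s.
Proof.
elim: n h s => [|n IH] h s /=; case: ifP => _; rewrite ?mulr0 ?mulr1 //.
by rewrite -expectZ; congr expect; apply/funext => x; apply: IH.
Qed.

Lemma survive_le r psi1 psi2 n h s :
  (forall h s, Inv s -> psi1 h s <= psi2 h s) -> Inv s ->
  survive r psi1 n h s <= survive r psi2 n h s.
Proof.
move=> Hpsi; elim: n h s => [|n IH] h s Is /=; case: ifP => // _; first exact: Hpsi.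
by apply: expect_le => s' Hs'; apply: IH; apply: HInv Hs'.
Qed.

Lemma survive_add r psi m n h s :
  survive r psi (m + n) h s = survive r (survive r psi n) m h s.
Proof.
elim: m h s => [|m IH] h s /=; case: ifP => Hs //.
- by rewrite survive_stop.
- by congr expect; apply/funext => x; apply: IH.
Qed.

Lemma reach_bot n h : reach R sc n h (sigma_bot G) = 1.
Proof. by case: n => [|n] /=; rewrite eqxx. Qed.

Lemma reach_survive_stop r n h s : 0 < r -> (s == sigma_bot G) || (r < V s) ->
  1 - reach R sc n h s - survive r (fun _ _ => 1) n h s <= V s / r.
Proof.
move=> r0 Hs; rewrite survive_stop // subr0.
case/orP: Hs => [/eqP-> | Hr]; first by rewrite reach_bot HVbot mul0r subrr.
have : 1 <= V s / r by rewrite ler_pdivlMr // mul1r ltW.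
by have := reach_ge0 n h s; lra.
Qed.

(* Optional stopping: the run leaves {V <= r} before terminating with probability
   at most V s / r. *)
Lemma reach_survive r n h s : 0 < r -> Inv s ->
  1 - reach R sc n h s - survive r (fun _ _ => 1) n h s <= V s / r.
Proof.
move=> r0; elim: n h s => [|n IH] h s Is;
  (have [/(reach_survive_stop _ _ r0) // | /norP[Hb /negbTE Hr]] :=
     boolP ((s == sigma_bot G) || (r < V s)));
  rewrite /= (negbTE Hb) Hr /=.
  by rewrite subr0 subrr divr_ge0 ?V_ge0 ?ltW.
rewrite -[X in X - _ - _](expect_cst 1 h s) -!expectB.
apply: le_trans (_ : expect (fun x => r^-1 * V x) h s <= _).
  by apply: expect_le => s' Hs'; rewrite mulrC; apply: IH; apply: HInv Hs'.
by rewrite expectZ mulrC ler_pM2r ?invr_gt0 // expect_V_le.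
Qed.

Definition decrease_prob (s : st) : R :=
  \sum_(l' | enabled s l' && (U (cfg_next s l') < U s)%N) ratr (Prb G s.1 l' s.2).

Section Sublevel.
Variables (r c : R).
Hypotheses (c_gt0 : 0 < c) (c_le1 : c <= 1).
Hypothesis Hc : forall s, Inv s -> V s <= r -> s != sigma_bot G ->
  kind G s.1 = KProb -> c < decrease_prob s.

Lemma expect_decrease h s : Inv s -> s != sigma_bot G -> V s <= r ->
  c <= expect (fun x => ((U x < U s)%N)%:R) h s.
Proof.
move=> Is Hb Hr.
have [Hk|Hk] := eqVneq (kind G s.1) KProb; last first.
  by have [s' Hs' ->] := expect_det h Hk; rewrite HUdec //; apply/eqP.
rewrite /expect Hk; apply/ltW; apply: lt_le_trans (Hc Is Hr Hb Hk) _.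
rewrite /decrease_prob big_mkcondr /=; apply/ler_sum => l _.
by case: ifP; rewrite ?mulr1 ?mulr0.
Qed.

Lemma rank_gt0 s : Inv s -> s != sigma_bot G -> V s <= r -> (0 < U s)%N.
Proof.
move=> Is Hb Hr; rewrite lt0n; apply/eqP => HU0.
have := expect_decrease [::] Is Hb Hr; rewrite HU0.
have -> : (fun x => ((U x < 0)%N)%:R : R) = fun=> 0.
  by apply/funext => x; rewrite ltn0.
by rewrite expect_cst leNgt c_gt0.
Qed.

Lemma survive_le_rank u h s : Inv s -> (U s <= u)%N ->
  survive r (fun _ _ => 1) u h s <= 1 - c ^+ u.
Proof.
elim: u h s => [|u IH] h s Is Hu;
  (have [Hstop|/norP[Hb /negbTE Hr]] := boolP ((s == sigma_bot G) || (r < V s));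
   first by rewrite survive_stop // subr_ge0 exprn_ile1 // ltW);
  have Hr' : V s <= r by rewrite leNgt Hr.
  by have := rank_gt0 Is Hb Hr'; rewrite ltnNge Hu.
rewrite /= (negbTE Hb) Hr /=.
apply: le_trans (_ : expect (fun x => 1 - c ^+ u * ((U x < U s)%N)%:R) h s <= _).
  apply: expect_le => s' Hs'; have Is' := HInv Is Hs'.
  case: (ltnP (U s') (U s)) => HU; rewrite ?mulr1 ?mulr0 ?subr0 ?survive_le1 //.
  by apply: IH => //; rewrite -ltnS (leq_trans HU).
rewrite expectB expect_cst expectZ exprSr lerB // ler_wpM2l ?expect_decrease //.
exact/exprn_ge0/ltW.
Qed.

Variable B : nat.
Hypothesis HB : forall s, Inv s -> V s <= r -> (U s <= B)%N.

Lemma survive_geometric k h s : Inv s ->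
  survive r (fun _ _ => 1) (k * B) h s <= (1 - c ^+ B) ^+ k.
Proof.
have q0 : 0 <= 1 - c ^+ B by rewrite subr_ge0 exprn_ile1 // ltW.
elim: k h s => [|k IH] h s Is; first by rewrite mul0n expr0 survive_le1.
rewrite mulSn survive_add exprSr.
apply: le_trans (_ : survive r (fun _ _ => (1 - c ^+ B) ^+ k) B h s <= _).
  by apply: survive_le => // h' s' Is'; apply: IH.
rewrite survive_cst ler_wpM2l ?exprn_ge0 //.
have [Hr|Hr] := ltP r (V s); first by rewrite survive_stop ?Hr ?orbT.
exact: survive_le_rank (HB Is Hr).
Qed.

End Sublevel.

Hypothesis Hcond : forall r : R,
  (exists B : nat, forall s, Inv s -> V s <= r -> (U s <= B)%N) /\
  (exists2 eps : R, 0 < eps & forall s, Inv s -> V s <= r -> s != sigma_bot G ->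
     kind G s.1 = KProb -> eps < decrease_prob s).

Lemma reach_close_to_one h s eta : Inv s -> 0 < eta ->
  exists n, 1 - eta <= reach R sc n h s.
Proof.
move=> Is eta0; have V1 : 0 < V s + 1 by have := V_ge0 Is; lra.
pose r := 2 * (V s + 1) / eta.
have r0 : 0 < r by rewrite divr_gt0 ?mulr_gt0.
have HVr : V s / r <= eta / 2.
  rewrite ler_pdivrMr // (_ : eta / 2 * r = V s + 1); first lra.
  by rewrite /r; field; rewrite gt_eqF.
have [[B HB] [eps eps0 Heps]] := Hcond r.
pose c := Num.min eps 1.
have c0 : 0 < c by rewrite lt_min eps0 ltr01.
have c1 : c <= 1 by rewrite ge_min lexx orbT.
have Hc s' : Inv s' -> V s' <= r -> s' != sigma_bot G -> kind G s'.1 = KProb ->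
    c < decrease_prob s'.
  by move=> *; apply: le_lt_trans (Heps _ _ _ _ _); rewrite ?ge_min ?lexx.
have [k Hk] : exists k, (1 - c ^+ B) ^+ k <= eta / 2.
  have cB0 : 0 < c ^+ B := exprn_gt0 B c0.
  have cB1 : c ^+ B <= 1 by rewrite exprn_ile1 // ltW.
  by apply: expr_eventually_le; [rewrite ger0_norm|]; lra.
exists (k * B)%N.
have := reach_survive (k * B) h r0 Is.
have := survive_geometric c0 c1 Hc HB k h Is.
lra.
Qed.

Lemma prob_term_sched_eq1 : Inv (sigma_init G) -> prob_term_sched R sc = 1.
Proof.
move=> Iinit; rewrite /prob_term_sched; set E := (X in sup X).
apply/eqP; rewrite eq_le ge_sup //=; last 2 first.
- by exists (reach R sc 0 [::] (sigma_init G)), 0%N.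
- by move=> _ [n _ <-]; apply: reach_le1.
apply/ler_addgt0Pr => eta eta0.
have [n Hn] := reach_close_to_one [::] Iinit eta0.
have : reach R sc n [::] (sigma_init G) <= sup E.
  by apply: ub_le_sup; [exists 1 => _ [m _ <-]; apply: reach_le1 | exists n].
lra.
Qed.

End Termination.

Theorem mainTheorem3 (R : realType) (G : CFG) (Hwf : wf_cfg G)
  (Inv : set (state G)) (V : state G -> R) (U : state G -> nat) :
  inductive_invariant Inv ->
  Inv (sigma_init G) ->
  supermartingale Inv V ->
  V (sigma_bot G) = 0 ->
  (forall s, Inv s -> s != sigma_bot G -> 0 < V s) ->
  U (sigma_bot G) = 0%N ->
  (forall s, Inv s -> s != sigma_bot G -> kind G s.1 <> KProb ->
     forall s', cfg_succ s s' -> (U s' < U s)%N) ->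
  (forall r : R,
     (exists B : nat, forall s, Inv s -> V s <= r -> (U s <= B)%N) /\
     (exists2 eps : R, 0 < eps &
        forall s, Inv s -> V s <= r -> s != sigma_bot G -> kind G s.1 = KProb ->
          eps < \sum_(l' | enabled s l' && (U (cfg_next s l') < U s)%N)
                  ratr (Prb G s.1 l' s.2))) ->
  Pr_term G R = 1.
Proof.
move=> HInv Hinit HVsm HVbot HVpos _ HUdec Hcond.
have Hterm (sc : scheduler G) : valid_sched sc -> prob_term_sched R sc = 1.
  by move=> Hsc; apply: (prob_term_sched_eq1 Hwf Hsc HInv HVsm HVbot HVpos HUdec Hcond).
have [sc0 Hsc0] : exists sc : scheduler G, valid_sched sc.
  have Hex (s : state G) : exists l', enabled s l' by case: Hwf.
  by exists (fun _ s => xchoose (Hex s)) => h s _; apply: xchooseP.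
rewrite /Pr_term (_ : [set p | _] = [set 1]) ?inf1 //.
apply/seteqP; split => [p [sc Hsc ->] | p ->] /=; first exact: Hterm.
by exists sc0; rewrite ?Hterm.
Qed.
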